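(* Let $A=[a_{ij}]$ be a real $n\times n$ matrix with zero diagonal and $f(\sigma)=\sum_{p=1}^{n-1}\sum_{q=p+1}^n a_{\sigma(p)\sigma(q)}$ its LOP objective function on $\Sigma_n$. Let $k\le n$, let $i_1,\dots,i_k\in\{1,\dots,n\}$ be distinct, and let $S=\{\sigma\in\Sigma_n:\sigma(1)=i_1,\dots,\sigma(k)=i_k\}$. Then $$\frac{1}{|S|}\sum_{\sigma\in S}f(\sigma)=\sum_{r=1}^{k}\ \sum_{j\in\{1,\dots,n\}\setminus\{i_1,\dots,i_r\}}a_{i_r j}+\frac12\sum_{l,m\in\{1,\dots,n\}\setminus\{i_1,\dots,i_k\}}a_{lm}.$$
   Context: $\Sigma_n$ is the symmetric group on $\{1,\dots,n\}$; $\sigma(p)$ is the row/column index placed in position $p$. *)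

From HB Require Import structures.
From mathcomp Require Import all_boot all_order all_fingroup all_algebra.
Set Implicit Arguments. Unset Strict Implicit. Unset Printing Implicit Defensive.
Import Order.TTheory GRing.Theory Num.Theory.
Local Open Scope ring_scope.

(* Conventions: indices are 0-based, {1..n} is 'I_n, Sigma_n is 'S_n.
   sigma p is the row/column index placed in position p. *)

Definition lop_obj (R : ringType) (n : nat) (A : 'M[R]_n) (s : 'S_n) : R :=
  \sum_(p < n) \sum_(q < n | (p < q)%N) A (s p) (s q).

Definition prefix_set (n k : nat) (hk : (k <= n)%N) (i : 'I_k -> 'I_n)
  : {set 'S_n} :=
  [set s : 'S_n | [forall r : 'I_k, s (widen_ord hk r) == i r]].

From HB Require Import structures.
From mathcomp Require Import all_boot all_order all_fingroup all_algebra.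
From mathcomp Require Import ring.
Import Order.TTheory GRing.Theory Num.Theory.
Local Open Scope ring_scope.

(* For [s] in [S], the pairs of positions [p < q] with [p] in the prefix
   contribute the first term of the formula, whatever [s] is.  If [p] and [q]
   are both outside the prefix, composing with the transposition of the
   positions [p] and [q] maps [S] onto itself, so [a_{s p, s q}] and
   [a_{s q, s p}] have the same sum over [S].  Hence twice the sum over [S] of
   the tail contribution is [|S|] times the sum of [a_{l m}] over all ordered
   pairs of values [l, m] outside the prefix, the diagonal being zero. *)

Lemma sum_ordered_pairs {V : nmodType} {n : nat}
    (P : pred 'I_n) (F : 'I_n -> 'I_n -> V) :
  (forall p, F p p = 0) ->
  \sum_(p | P p) \sum_(q | P q && (p < q)%N) (F p q + F q p)
  = \sum_(p | P p) \sum_(q | P q) F p q.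
Proof.
move=> F0; rewrite (eq_bigr _ (fun p _ => big_split _ _ _ _ _)) big_split /=.
rewrite [X in _ + X](exchange_big_dep P) => [|? ? _ /andP[] //].
rewrite -big_split; apply: eq_bigr => p Pp /=.
rewrite [in RHS](bigID (fun q : 'I_n => (p < q)%N)) /=; congr (_ + _).
rewrite [RHS](bigD1 p) ?Pp ?ltnn //= F0 add0r; apply: eq_bigl => q.
by rewrite -andbA ltn_neqAle -leqNgt; congr (_ && _); exact: andbC.
Qed.

Definition lop_tail {R : nmodType} {n : nat} (k : nat) (A : 'M[R]_n)
    (s : 'S_n) : R :=
  \sum_(p < n | (k <= p)%N) \sum_(q < n | (p < q)%N) A (s p) (s q).

Section PrefixSet.

Set Implicit Arguments.
Unset Strict Implicit.

Context {n k : nat} (hk : (k <= n)%N) (i : 'I_k -> 'I_n).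

Local Notation S := (prefix_set hk i).

Lemma prefix_setP (s : 'S_n) :
  reflect (forall r, s (widen_ord hk r) = i r) (s \in S).
Proof. by rewrite inE; apply: (iffP forallP) => H r; apply/eqP. Qed.

Lemma prefix_set_mem_le (s : 'S_n) (r : 'I_k) (q : 'I_n) : s \in S ->
  (s q \in [set i r' | r' : 'I_k & (r' <= r)%N]) = (q <= r)%N.
Proof.
move/prefix_setP => sP; apply/imsetP/idP => [[r']|qr].
  by rewrite inE -sP => r'r /perm_inj ->.
have qk : (q < k)%N by apply: leq_ltn_trans qr _.
by exists (Ordinal qk); rewrite ?inE // -sP; congr (s _); apply: val_inj.
Qed.

Lemma prefix_set_mem_range (s : 'S_n) (q : 'I_n) : s \in S ->
  (s q \in [set i r | r : 'I_k]) = (q < k)%N.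
Proof.
move/prefix_setP => sP; apply/imsetP/idP => [[r _]|qk].
  by rewrite -sP => /perm_inj -> /=.
by exists (Ordinal qk) => //; rewrite -sP; congr (s _); apply: val_inj.
Qed.

Lemma prefix_set_tperm (s : 'S_n) (p q : 'I_n) : (k <= p)%N -> (k <= q)%N ->
  ((tperm p q * s)%g \in S) = (s \in S).
Proof.
move=> kp kq; rewrite !inE; apply: eq_forallb => r.
have outside (x : 'I_n) : (k <= x)%N -> x != widen_ord hk r.
  by move=> kx; rewrite -val_eqE gtn_eqF // (leq_trans (ltn_ord r) kx).
by rewrite permM tpermD ?outside.
Qed.

Lemma prefix_set_sum_swap (V : nmodType) (F : 'I_n -> 'I_n -> V) (p q : 'I_n) :
  (k <= p)%N -> (k <= q)%N ->
  \sum_(s in S) F (s p) (s q) = \sum_(s in S) F (s q) (s p).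
Proof.
move=> kp kq; rewrite (reindex_inj (mulgI (tperm p q))).
by apply: eq_big => [s|s _]; rewrite ?prefix_set_tperm // !permM tpermL tpermR.
Qed.

Lemma prefix_set_card_gt0 : injective i -> (0 < #|S|)%N.
Proof.
move=> hi; apply/card_gt0P; pose I := [set i r | r : 'I_k].
pose L := [seq i r | r <- enum 'I_k] ++ enum (~: I).
have sizeL : size L = n.
  have cardI : #|I| = k by rewrite card_imset // card_ord.
  by rewrite size_cat size_map size_enum_ord -cardE -cardI cardsC card_ord.
have uniqL : uniq L.
  rewrite cat_uniq (map_inj_uniq hi) !enum_uniq andbT /=.
  apply/hasPn => x; rewrite mem_enum inE => xI.
  by apply: contra xI => /mapP[r _ ->]; apply: imset_f.
pose f (p : 'I_n) := nth p L p.
have f_inj : injective f.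
  move=> p q; rewrite /f (set_nth_default q p) ?sizeL // => /eqP.
  by rewrite nth_uniq ?sizeL // => /eqP /val_inj.
exists (perm f_inj); apply/prefix_setP => r; rewrite permE /f /=.
rewrite nth_cat size_map size_enum_ord ltn_ord (nth_map r) ?size_enum_ord //.
by rewrite nth_ord_enum.
Qed.

Lemma prefix_set_sum_compl (V : nmodType) (F : 'I_n -> V) (s : 'S_n) :
  s \in S ->
  \sum_(l | l \notin [set i r | r : 'I_k]) F l
  = \sum_(p : 'I_n | (k <= p)%N) F (s p).
Proof.
move=> sS; rewrite (reindex_inj (@perm_inj _ s)); apply: eq_bigl => p.
by rewrite prefix_set_mem_range // -leqNgt.
Qed.

Lemma lop_obj_prefix_set (R : nzRingType) (A : 'M[R]_n) (s : 'S_n) : s \in S ->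
  lop_obj A s
  = \sum_(r < k) \sum_(j : 'I_n | j \notin [set i r' | r' : 'I_k & (r' <= r)%N])
        A (i r) j
    + lop_tail k A s.
Proof.
move=> sS; rewrite /lop_obj (bigID (fun p : 'I_n => (p < k)%N)) /=.
congr (_ + _); last by apply: eq_bigl => p; rewrite -leqNgt.
rewrite (big_ord_narrow hk); apply: eq_bigr => r _.
move/prefix_setP: (sS) => ->; rewrite [RHS](reindex_inj (@perm_inj _ s)).
by apply: eq_bigl => q; rewrite prefix_set_mem_le // -ltnNge.
Qed.

Lemma prefix_set_sum_lop_tail (R : nzRingType) (A : 'M[R]_n) :
  (forall j, A j j = 0) ->
  (\sum_(s in S) lop_tail k A s) *+ 2
  = (\sum_(l | l \notin [set i r | r : 'I_k])
       \sum_(m | m \notin [set i r | r : 'I_k]) A l m) *+ #|S|.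
Proof.
move=> A0.
have tailE s : lop_tail k A s
    = \sum_(p : 'I_n | (k <= p)%N)
        \sum_(q : 'I_n | (k <= q)%N && (p < q)%N) A (s p) (s q).
  apply: eq_bigr => p kp; apply: eq_bigl => q.
  by apply/idP/andP => [pq|[]//]; split=> //; apply: leq_trans kp (ltnW pq).
have swapE : \sum_(s in S) lop_tail k A s
    = \sum_(s in S) \sum_(p : 'I_n | (k <= p)%N)
        \sum_(q : 'I_n | (k <= q)%N && (p < q)%N) A (s q) (s p).
  rewrite (eq_bigr _ (fun s _ => tailE s)) exchange_big [RHS]exchange_big.
  apply: eq_bigr => p kp; rewrite exchange_big [RHS]exchange_big.
  by apply: eq_bigr => q /andP[kq _]; apply: prefix_set_sum_swap.
rewrite mulr2n {2}swapE -big_split -sumr_const; apply: eq_bigr => s sS /=.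
rewrite tailE -big_split; under eq_bigr do rewrite -big_split.
rewrite (sum_ordered_pairs _ (fun p q => A (s p) (s q)) (fun p => A0 (s p))).
rewrite (prefix_set_sum_compl _ sS); apply: eq_bigr => p _.
by rewrite (prefix_set_sum_compl _ sS).
Qed.

End PrefixSet.

Theorem proposition5 (R : realFieldType) (n : nat) (A : 'M[R]_n)
  (hdiag : forall j : 'I_n, A j j = 0)
  (k : nat) (hk : (k <= n)%N) (i : 'I_k -> 'I_n) (hi : injective i) :
  (#|prefix_set hk i|%:R)^-1 *
    (\sum_(s in prefix_set hk i) lop_obj A s)
  = \sum_(r < k) \sum_(j : 'I_n | j \notin [set i r' | r' : 'I_k & (r' <= r)%N])
        A (i r) j
    + 2^-1 * \sum_(l : 'I_n | l \notin [set i r | r : 'I_k])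
             \sum_(m : 'I_n | m \notin [set i r | r : 'I_k]) A l m.
Proof.
have S_neq0 : (#|prefix_set hk i|%:R : R) != 0.
  by rewrite pnatr_eq0 -lt0n prefix_set_card_gt0.
rewrite (eq_bigr _ (fun s sS => lop_obj_prefix_set A sS)) big_split sumr_const /=.
have tail2 := prefix_set_sum_lop_tail hk i hdiag.
set G := \sum_(s in _) _ in tail2 *.
set C := \sum_(l | _) _ in tail2 *.
have -> : G = C *+ #|prefix_set hk i| / 2.
  by rewrite -tail2 -[G *+ 2]mulr_natr mulfK ?pnatr_eq0.
set T := \sum_(r < k) _.
by rewrite -(mulr_natr T) -(mulr_natr C); field.
Qed.
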